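(* Let $G$ be a simple undirected graph on $\{1,\dots,n\}$ with adjacency $g_{ij}$ and degrees $d_i$. Let the exposure be binary, $e_i=I\big(\sum_jg_{ij}z_j>0\big)$, and suppose $Y_i(z_i,e_i)=\alpha_i+\beta_iz_i+\gamma_ie_i$. Under a completely randomized design with $n_t$ treated and $n_c=n-n_t\ge1$ control units ($n_t\ge1$), if $n_c<\min_id_i$ then the estimator $$\hat\beta_{naive}=\frac{\sum_i Y_i^{obs}Z_i}{\sum_i Z_i}-\frac{\sum_i Y_i^{obs}(1-Z_i)}{\sum_i(1-Z_i)}$$ is unbiased for $\mathrm{DTE}=\frac1n\sum_i\big(Y_i(1,0)-Y_i(0,0)\big)$, i.e. $\mathbb E[\hat\beta_{naive}]=\mathrm{DTE}$.
   Context: Completely randomized design: $\mathbf Z$ is uniform over vectors in $\{0,1\}^n$ with exactly $n_t$ ones. $E_i=I(\sum_jg_{ij}Z_j>0)$ and $Y_i^{obs}=Y_i(Z_i,E_i)$. *)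

From HB Require Import structures.
From mathcomp Require Import all_boot all_order all_algebra.
Set Implicit Arguments. Unset Strict Implicit. Unset Printing Implicit Defensive.
Import Order.TTheory GRing.Theory Num.Theory.
Local Open Scope ring_scope.

(* Units are 'I_n (i.e. {0,...,n-1} standing for {1,...,n}).
   A treatment assignment is z : {ffun 'I_n -> bool}. *)

Definition simple_graph (n : nat) (g : rel 'I_n) : Prop :=
  symmetric g /\ irreflexive g.

Definition degree (n : nat) (g : rel 'I_n) (i : 'I_n) : nat := #|[set j | g i j]|.

Definition exposure (n : nat) (g : rel 'I_n) (z : {ffun 'I_n -> bool}) (i : 'I_n) : bool :=
  (0 < \sum_(j < n) (g i j : nat) * (z j : nat))%N.

Definition crd (n nt : nat) : {set {ffun 'I_n -> bool}} :=
  [set z : {ffun 'I_n -> bool} | #|[set i | z i]| == nt].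

Definition crd_expect (R : fieldType) (n nt : nat) (f : {ffun 'I_n -> bool} -> R) : R :=
  (\sum_(z in crd n nt) f z) / #|crd n nt|%:R.

Definition Yobs (R : ringType) (n : nat) (g : rel 'I_n) (alpha beta gamma : 'I_n -> R)
  (z : {ffun 'I_n -> bool}) (i : 'I_n) : R :=
  alpha i + beta i * (z i)%:R + gamma i * (exposure g z i)%:R.

Definition beta_naive (R : fieldType) (n : nat) (g : rel 'I_n) (alpha beta gamma : 'I_n -> R)
  (z : {ffun 'I_n -> bool}) : R :=
  (\sum_(i < n) Yobs g alpha beta gamma z i * (z i)%:R) / (\sum_(i < n) (z i)%:R)
  - (\sum_(i < n) Yobs g alpha beta gamma z i * (1 - (z i)%:R)) / (\sum_(i < n) (1 - (z i)%:R)).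

Definition DTE (R : fieldType) (n : nat) (alpha beta gamma : 'I_n -> R) : R :=
  (n%:R)^-1 * \sum_(i < n) ((alpha i + beta i * 1 + gamma i * 0)
                            - (alpha i + beta i * 0 + gamma i * 0)).

(* Since fewer units are controls than any unit has neighbours, under every
   admissible assignment each unit has a treated neighbour, so e_i = 1 always.
   The outcomes then follow a model without interference,
   Y_i(z) = (alpha_i + gamma_i) + beta_i z, for which the difference in means is
   unbiased: complete randomization is invariant under permutations of the
   units, so each unit is treated with probability n_t / n. *)

From mathcomp Require Import all_boot all_algebra all_fingroup ring.
Set Implicit Arguments. Unset Strict Implicit. Unset Printing Implicit Defensive.
Import GRing.Theory Num.Theory.
Local Open Scope ring_scope.

Definition diff_in_means (R : fieldType) (n : nat) (y : 'I_n -> R)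
  (z : {ffun 'I_n -> bool}) : R :=
  (\sum_(i < n) y i * (z i)%:R) / (\sum_(i < n) (z i)%:R)
  - (\sum_(i < n) y i * (1 - (z i)%:R)) / (\sum_(i < n) (1 - (z i)%:R)).

Lemma eq_diff_in_means (R : fieldType) (n : nat) (y y' : 'I_n -> R) z :
  y =1 y' -> diff_in_means y z = diff_in_means y' z.
Proof.
move=> eq_y; rewrite /diff_in_means.
by congr (_ / _ - _ / _); apply: eq_bigr => i _; rewrite eq_y.
Qed.

Section CompletelyRandomizedDesign.

Variables n nt : nat.

Lemma crd_perm (s : {perm 'I_n}) (z : {ffun 'I_n -> bool}) :
  ([ffun k => z (s k)] \in crd n nt) = (z \in crd n nt).
Proof.
rewrite !inE -(card_preimset [set k | z k] (@perm_inj _ s)).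
by congr (_ == _); apply: eq_card => k; rewrite !inE ffunE.
Qed.

Lemma crd_sum_exchangeable (V : nmodType) (F : bool -> V) (i j : 'I_n) :
  \sum_(z in crd n nt) F (z i) = \sum_(z in crd n nt) F (z j).
Proof.
pose swap (z : {ffun 'I_n -> bool}) := [ffun k => z (tperm i j k)].
have swapK : involutive swap by move=> z; apply/ffunP => k; rewrite !ffunE tpermK.
rewrite (reindex_inj (inv_inj swapK)) /=.
by apply: eq_big => z; rewrite ?crd_perm // ffunE tpermL.
Qed.

Lemma crd_sum_treated {R : pzRingType} (z : {ffun 'I_n -> bool}) :
  z \in crd n nt -> \sum_(i < n) (z i)%:R = nt%:R :> R.
Proof.
rewrite inE => /eqP <-; rewrite -natr_sum -sum1dep_card; congr _%:R.
by rewrite [RHS]big_mkcond; apply: eq_bigr => i _; case: (z i).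
Qed.

Lemma crd_sum_control {R : pzRingType} (z : {ffun 'I_n -> bool}) :
  z \in crd n nt -> \sum_(i < n) (1 - (z i)%:R) = n%:R - nt%:R :> R.
Proof. by move=> zin; rewrite sumrB (crd_sum_treated zin) sumr_const card_ord. Qed.

Lemma crd_card_gt0 : (nt <= n)%N -> (0 < #|crd n nt|)%N.
Proof.
move=> le_nt_n; have : (0 < 'C(#|'I_n|, nt))%N by rewrite card_ord bin_gt0.
rewrite -card_draws => /card_gt0P[A]; rewrite inE => /eqP cardA.
apply/card_gt0P; exists [ffun k => k \in A]; rewrite inE -cardA.
by apply/eqP/eq_card => k; rewrite inE ffunE.
Qed.

Section Expectation.

Variable R : numFieldType.
Implicit Types f h : {ffun 'I_n -> bool} -> R.

Lemma eq_crd_expect f h : {in crd n nt, f =1 h} -> crd_expect nt f = crd_expect nt h.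
Proof. by move=> eq_fh; rewrite /crd_expect (eq_bigr _ eq_fh). Qed.

Lemma crd_expectB f h :
  crd_expect nt (fun z => f z - h z) = crd_expect nt f - crd_expect nt h.
Proof. by rewrite /crd_expect sumrB mulrBl. Qed.

Lemma crd_expectMr f (c : R) :
  crd_expect nt (fun z => f z * c) = crd_expect nt f * c.
Proof. by rewrite /crd_expect -mulr_suml mulrAC. Qed.

Lemma crd_expectMl (c : R) f :
  crd_expect nt (fun z => c * f z) = c * crd_expect nt f.
Proof. by rewrite /crd_expect -mulr_sumr mulrA. Qed.

Lemma crd_expect_sum (F : 'I_n -> {ffun 'I_n -> bool} -> R) :
  crd_expect nt (fun z => \sum_(i < n) F i z) = \sum_(i < n) crd_expect nt (F i).
Proof. by rewrite /crd_expect exchange_big mulr_suml. Qed.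

Lemma crd_expect_cst (c : R) :
  (nt <= n)%N -> crd_expect nt (fun _ : {ffun 'I_n -> bool} => c) = c.
Proof.
move=> le_nt_n; rewrite /crd_expect sumr_const -[c *+ _]mulr_natr mulfK //.
by rewrite pnatr_eq0 -lt0n crd_card_gt0.
Qed.

Lemma crd_expect_treated (i : 'I_n) :
  (nt <= n)%N -> crd_expect nt (fun z => (z i)%:R) = nt%:R / n%:R :> R.
Proof.
move=> le_nt_n.
have n_gt0 : (0 < n)%N by apply: leq_ltn_trans (ltn_ord i).
have double_count : n%:R * \sum_(z in crd n nt) (z i)%:R = nt%:R * #|crd n nt|%:R :> R.
  rewrite mulr_natl -[n in _ *+ n]card_ord -sumr_const.
  rewrite (eq_bigr (fun j => \sum_(z in crd n nt) (z j)%:R)); last first.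
    by move=> j _; apply: (crd_sum_exchangeable (fun b : bool => b%:R)).
  rewrite exchange_big /= (eq_bigr _ (fun z => @crd_sum_treated R z)).
  by rewrite sumr_const mulr_natr.
rewrite /crd_expect; apply: (@mulfI _ n%:R); first by rewrite pnatr_eq0 -lt0n.
rewrite mulrA double_count mulfK; last by rewrite pnatr_eq0 -lt0n crd_card_gt0.
by rewrite mulrC mulfVK // pnatr_eq0 -lt0n.
Qed.

Lemma crd_expect_linear (c : 'I_n -> R) :
  (nt <= n)%N ->
  crd_expect nt (fun z => \sum_(i < n) c i * (z i)%:R) = nt%:R / n%:R * \sum_(i < n) c i.
Proof.
move=> le_nt_n; rewrite crd_expect_sum mulr_sumr; apply: eq_bigr => i _.
by rewrite crd_expectMl crd_expect_treated // mulrC.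
Qed.

Lemma crd_expect_linear_control (c : 'I_n -> R) :
  (nt <= n)%N ->
  crd_expect nt (fun z => \sum_(i < n) c i * (1 - (z i)%:R))
  = (1 - nt%:R / n%:R) * \sum_(i < n) c i.
Proof.
move=> le_nt_n.
rewrite (@eq_crd_expect _ (fun z => \sum_(i < n) c i - \sum_(i < n) c i * (z i)%:R)).
  by rewrite crd_expectB crd_expect_cst // crd_expect_linear // mulrBl mul1r.
by move=> z _; rewrite -sumrB; apply: eq_bigr => i _; rewrite mulrBr mulr1.
Qed.

End Expectation.

Lemma diff_in_means_crd {R : fieldType} (y1 y0 : 'I_n -> R) z :
  z \in crd n nt ->
  diff_in_means (fun i => if z i then y1 i else y0 i) z
  = (\sum_(i < n) y1 i * (z i)%:R) / nt%:R
    - (\sum_(i < n) y0 i * (1 - (z i)%:R)) / (n%:R - nt%:R).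
Proof.
move=> zin; rewrite /diff_in_means crd_sum_treated // crd_sum_control //.
congr (_ / _ - _ / _); apply: eq_bigr => i _.
  by case: (z i); rewrite ?mulr0.
by case: (z i); rewrite ?subrr ?subr0 ?mulr0.
Qed.

Lemma diff_in_means_unbiased (R : numFieldType) (y1 y0 : 'I_n -> R) :
  (0 < nt < n)%N ->
  crd_expect nt (fun z => diff_in_means (fun i => if z i then y1 i else y0 i) z)
  = n%:R^-1 * \sum_(i < n) (y1 i - y0 i).
Proof.
case/andP=> nt_gt0 lt_nt_n; have le_nt_n := ltnW lt_nt_n.
have n_neq0 : n%:R != 0 :> R by rewrite pnatr_eq0 -lt0n (leq_trans nt_gt0).
have nt_neq0 : nt%:R != 0 :> R by rewrite pnatr_eq0 -lt0n.
have nc_neq0 : n%:R - nt%:R != 0 :> R by rewrite -natrB // pnatr_eq0 subn_eq0 -ltnNge.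
rewrite (eq_crd_expect (diff_in_means_crd y1 y0)) crd_expectB !crd_expectMr.
rewrite crd_expect_linear // crd_expect_linear_control // sumrB.
by field; rewrite n_neq0 nt_neq0 nc_neq0.
Qed.

End CompletelyRandomizedDesign.

Lemma exposureP (n : nat) (g : rel 'I_n) (z : {ffun 'I_n -> bool}) (i : 'I_n) :
  reflect (exists j, g i j && z j) (exposure g z i).
Proof.
rewrite /exposure lt0n sum_nat_eq0 negb_forall.
by apply: (iffP existsP) => -[j gz]; exists j; move: gz; case: (g i j); case: (z j).
Qed.

Lemma exposure_crd (n nt : nat) (g : rel 'I_n) z i :
  z \in crd n nt -> (n - nt < degree g i)%N -> exposure g z i.
Proof.
rewrite inE => /eqP card_treated deg_gt; apply/exposureP/existsP.
apply: contraTT deg_gt; rewrite negb_exists -leqNgt => /forallP untreated_nbhd.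
have nbhd_untreated : [set j | g i j] \subset ~: [set j | z j].
  by apply/subsetP => j; rewrite !inE; move: (untreated_nbhd j); case: (g i j).
apply: leq_trans (subset_leq_card nbhd_untreated) _.
by rewrite -card_treated cardsCs setCK card_ord.
Qed.

Lemma Yobs_exposed {R : nzRingType} n (g : rel 'I_n) (alpha beta gamma : 'I_n -> R)
    z i :
  exposure g z i ->
  Yobs g alpha beta gamma z i
  = if z i then alpha i + beta i + gamma i else alpha i + gamma i.
Proof. by rewrite /Yobs => ->; case: (z i); rewrite /= ?mulr1 ?mulr0 ?addr0. Qed.

Theorem proposition16 (R : realFieldType) (n nt : nat) (g : rel 'I_n)
  (alpha beta gamma : 'I_n -> R) :
  simple_graph g ->
  (1 <= nt)%N -> (1 <= n - nt)%N ->
  (forall i : 'I_n, (n - nt < degree g i)%N) ->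
  crd_expect nt (beta_naive g alpha beta gamma) = DTE alpha beta gamma.
Proof.
move=> _ nt_gt0 nc_gt0 deg_gt.
pose y1 i := alpha i + beta i + gamma i; pose y0 i := alpha i + gamma i.
have beta_naive_crd : {in crd n nt, beta_naive g alpha beta gamma =1
    fun z => diff_in_means (fun i => if z i then y1 i else y0 i) z}.
  move=> z zin; apply: eq_diff_in_means => i.
  exact: Yobs_exposed (exposure_crd zin (deg_gt i)).
rewrite (eq_crd_expect beta_naive_crd) diff_in_means_unbiased; last first.
  by rewrite nt_gt0 -subn_gt0.
by rewrite /DTE; congr (_ * _); apply: eq_bigr => i _; rewrite /y1 /y0; ring.
Qed.
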